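(* $\mathrm{GenMem}(\mathrm{RL}) = 2$.
   Context: Let $\Omega=\mathbb{N}\times\{0,1\}$ with partial order $(n,a)\preceq(m,b)$ iff $(n,a)=(m,b)$ or $n<m$. Let $\mathbb{M}$ be the set of all functions $f\colon\Omega\to\Omega$ monotone w.r.t. $\preceq$. The Rope Ladder condition $\mathrm{RL}\subseteq\mathbb{M}^\omega$ (a winning condition over the color set $\mathbb{M}$) consists of all sequences $(f_1,f_2,\ldots)\in\mathbb{M}^\omega$ for which there is $(N,b)\in\Omega$ with $f_n\circ\cdots\circ f_1((0,0))\preceq(N,b)$ for all $n\ge1$. An arena over a color set $C$ is a tuple $\langle V_P, V_A, E\rangle$ of finite sets with $V_P\cap V_A=\varnothing$, $V=V_P\cup V_A\neq\varnothing$, $E\subseteq V\times C\times V$, every node having an outgoing edge. Paths are non-empty finite/infinite sequences of consecutive edges, plus $0$-length paths $\lambda_v$ at each node. A Protagonist's strategy maps each finite path ending in $V_P$ to an outgoing edge of its last node; a path is consistent with $S$ if every edge leaving a Protagonist node along it is the one chosen by $S$ on the preceding prefix. $S$ is winning from $u$ w.r.t. $W\subseteq C^\omega$ if every infinite path consistent with $S$ from $u$ has color sequence in $W$; $S$ is optimal w.r.t. $W$ if there is no node from which some strategy wins w.r.t. $W$ but $S$ does not. A (general) memory structure is $\langle M,m_{init},\delta\rangle$ with $M$ finite, $m_{init}\in M$, $\delta\colon M\times E\to M$ (extended to finite edge sequences by iteration). A strategy $S$ is built on top of it if $S(p_1)=S(p_2)$ whenever $p_1,p_2$ end at the same Protagonist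 node and $\delta(m_{init},p_1)=\delta(m_{init},p_2)$; with $k$ memory states this is a strategy with $k$ states of general memory. $\mathrm{GenMem}(W)$ is the least $k\in\mathbb{Z}^+$ such that every arena over $C$ admits a Protagonist's strategy with $k$ states of general memory that is optimal w.r.t. $W$ ($+\infty$ if none exists). *)

From mathcomp Require Import all_boot.
Set Implicit Arguments. Unset Strict Implicit. Unset Printing Implicit Defensive.

(* Omega = N x {0,1}; the bit 0 is encoded as false, 1 as true. *)
Definition Omega : Type := (nat * bool)%type.

Definition ole (x y : Omega) : Prop := x = y \/ (x.1 < y.1)%N.

Definition monotoneO (f : Omega -> Omega) : Prop :=
  forall x y, ole x y -> ole (f x) (f y).

Definition MM : Type := {f : Omega -> Omega | monotoneO f}.

(* position after applying the first n colors: pos w n = f_n o ... o f_1 (0,0),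
   where the sequence (f_1, f_2, ...) is w 0, w 1, ... *)
Fixpoint pos (w : nat -> MM) (n : nat) : Omega :=
  match n with
  | 0 => (0%N, false)
  | n'.+1 => proj1_sig (w n') (pos w n')
  end.

Definition RL (w : nat -> MM) : Prop :=
  exists Nb : Omega, forall n, (1 <= n)%N -> ole (pos w n) Nb.

(* An arena over color set C: finite node set V, partitioned by isP into
   Protagonist (isP v = true) and Antagonist nodes; finite edge set, each edge
   e being the triple (src e, col e, tgt e) (the triple map is injective, so
   edges form a subset of V x C x V); every node has an outgoing edge. *)
Record arena (C : Type) := Arena {
  V : finType;
  Ed : finType;
  isP : V -> bool;
  src : Ed -> V;
  col : Ed -> C;
  tgt : Ed -> V;
  arena_inj : forall e1 e2, src e1 = src e2 -> col e1 = col e2 ->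
                tgt e1 = tgt e2 -> e1 = e2;
  arena_nonempty : (0 < #|V|)%N;
  arena_total : forall v : V, exists e : Ed, src e = v
}.

Section Games.
Variables (C : Type) (A : arena C).

(* A finite path is represented as (v, s): start node v and consecutive edges s.
   (v, [::]) is the 0-length path lambda_v. *)
Fixpoint valid (v : V A) (s : seq (Ed A)) : Prop :=
  match s with
  | [::] => True
  | e :: s' => src e = v /\ valid (tgt e) s'
  end.

Definition lastnode (v : V A) (s : seq (Ed A)) : V A := last v (map (@tgt C A) s).

Definition is_strategy (S : V A -> seq (Ed A) -> Ed A) : Prop :=
  forall v s, valid v s -> isP (lastnode v s) -> src (S v s) = lastnode v s.

Definition inf_path_from (u : V A) (p : nat -> Ed A) : Prop :=
  src (p 0%N) = u /\ forall n, tgt (p n) = src (p n.+1).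

Definition consistent (S : V A -> seq (Ed A) -> Ed A) (u : V A) (p : nat -> Ed A) : Prop :=
  forall n, isP (src (p n)) -> p n = S u (mkseq p n).

Definition winning_from (W : (nat -> C) -> Prop) (S : V A -> seq (Ed A) -> Ed A)
  (u : V A) : Prop :=
  forall p, inf_path_from u p -> consistent S u p -> W (fun n => col (p n)).

Definition optimal (W : (nat -> C) -> Prop) (S : V A -> seq (Ed A) -> Ed A) : Prop :=
  forall u, (exists S', is_strategy S' /\ winning_from W S' u) -> winning_from W S u.

(* S is built on top of some memory structure with exactly k states
   (memory states are 'I_k, delta extended to sequences by iteration). *)
Definition built_on_mem (k : nat) (S : V A -> seq (Ed A) -> Ed A) : Prop :=
  exists (minit : 'I_k) (delta : 'I_k -> Ed A -> 'I_k),
    forall v1 s1 v2 s2, valid v1 s1 -> valid v2 s2 ->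
      lastnode v1 s1 = lastnode v2 s2 -> isP (lastnode v1 s1) ->
      foldl delta minit s1 = foldl delta minit s2 ->
      S v1 s1 = S v2 s2.

End Games.

Definition admits_mem (C : Type) (W : (nat -> C) -> Prop) (k : nat) : Prop :=
  forall A : arena C, exists S : V A -> seq (Ed A) -> Ed A,
    is_strategy S /\ built_on_mem k S /\ optimal W S.

Definition GenMem_eq (C : Type) (W : (nat -> C) -> Prop) (n : nat) : Prop :=
  (0 < n)%N /\ admits_mem W n /\ forall j, (0 < j)%N -> (j < n)%N -> ~ admits_mem W j.

(* Upper bound: consider the safety game on configurations (v, x) of V x Omega
   in which Protagonist must keep the level x.1 bounded, and call (v, x) safe
   if it lies in a trap of bounded level.  Against any fixed strategy,
   Antagonist can keep an unsafe configuration unsafe while forcing its level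
   up (by finite branching, otherwise the consistent continuations would
   themselves form a bounded trap), so no strategy wins from an unsafe start.
   Conversely all safe starts lie in one bounded trap Y.  At each node the
   points of Y are dominated by the at most two points of Y on its top level;
   as colours are monotone, Protagonist wins by remembering which of the two
   dominates the current position and moving as if standing there.
   Lower bound: in a one-node arena with the loops
   F : (n,0) |-> (n,1), (n,1) |-> (n+1,1) and G : (n,1) |-> (n,0), (n,0) |-> (n+1,0),
   alternating F and G keeps the position in {(0,0), (0,1)}, while a
   memoryless strategy repeats a single loop and climbs the ladder. *)

From Stdlib Require Import ClassicalEpsilon.
From mathcomp Require Import all_boot.
Set Implicit Arguments. Unset Strict Implicit. Unset Printing Implicit Defensive.

Lemma ole_refl x : ole x x.
Proof. by left. Qed.

Lemma ole_trans y x z : ole x y -> ole y z -> ole x z.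
Proof.
case=> [->|xy] // [<-|yz]; right=> //; exact: ltn_trans yz.
Qed.

Lemma ole_level x y : ole x y -> x.1 <= y.1.
Proof. by case=> [->|/ltnW]. Qed.

Definition oleb (x y : Omega) : bool := (x == y) || (x.1 < y.1).

Lemma oleP x y : reflect (ole x y) (oleb x y).
Proof.
by apply: (iffP orP) => -[/eqP|]; [left | right | move=> ->; left | right].
Qed.

Lemma monotoneO_step (f : Omega -> Omega) :
  (forall n a b, ole (f (n, a)) (f (n.+1, b))) -> monotoneO f.
Proof.
move=> fS [n a] [m b] [-> | /= ltnm]; first exact: ole_refl.
elim: m b ltnm => // m IHm b; rewrite ltnS leq_eqVlt => /orP[/eqP-> | ltnm].
  exact: fS.
exact: ole_trans (IHm false ltnm) (fS _ _ _).
Qed.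

Lemma bounded_ex_max (P : nat -> Prop) N :
  (forall k, P k -> k < N) -> (exists k, P k) ->
  exists2 m, P m & forall k, P k -> k <= m.
Proof.
elim: N => [|N IHN] bndP exP; first by case: exP => k /bndP.
have [PN | nPN] := classic (P N); first by exists N => // k /bndP.
apply: IHN exP => k Pk; have := bndP k Pk.
by rewrite ltnS leq_eqVlt => /orP[/eqP eqkN | //]; rewrite eqkN in Pk.
Qed.

(* The points of a bounded set on its top level are pairwise incomparable, so
   there are at most two of them and they dominate the whole set. *)
Lemma bounded_cover2 (P : Omega -> Prop) N z :
  (forall x, P x -> x.1 < N) -> P z ->
  exists a b, [/\ P a, P b, ole z a & forall x, P x -> ole x a \/ ole x b].
Proof.
case: z => k d bndP Pz.
have [n [c Pnc] top] := @bounded_ex_max (fun k => exists c, P (k, c)) N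
  (fun j '(ex_intro c Pjc) => bndP _ Pjc) (ex_intro _ k (ex_intro _ d Pz)).
have kn : k <= n by apply: top; exists d.
pose c0 := if k == n then d else c.
have Pa : P (n, c0) by rewrite /c0; case: eqP => [<-|].
have za : ole (k, d) (n, c0).
  rewrite /c0; case: eqP => [<-|neq]; first exact: ole_refl.
  by right; rewrite /= ltn_neqAle kn andbT; apply/eqP.
have levels x : P x -> x.1 < n \/ x = (n, c0) \/ x = (n, ~~ c0).
  case: x => j e Pje; have := top j (ex_intro _ e Pje).
  rewrite leq_eqVlt => /orP[/eqP-> | ]; last by left.
  by right; case: e c0 {Pje Pa za} => -[]; [left | right | right | left].
have [Pb | nPb] := classic (P (n, ~~ c0)).
  exists (n, c0), (n, ~~ c0); split=> // x /levels[lt | [->|->]].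
  - by left; right.
  - by left; left.
  - by right; left.
exists (n, c0), (n, c0); split=> // x Px; left.
by case: (levels x Px) => [lt | [->|eqx]]; [right | left | rewrite eqx in Px].
Qed.

Section ChainLimit.
Variables (T : Type) (x0 : T) (H : nat -> seq T).
Hypotheses (H_grows : forall k, exists t, H k.+1 = H k ++ t)
           (H_size : forall k, k <= size (H k)).

Let extends (s1 s2 : seq T) := exists t, s2 = s1 ++ t.

Let H_extends j k : j <= k -> extends (H j) (H k).
Proof.
apply: homo_leq => [s | s2 s1 s3 [t1 ->] [t2 ->] | //].
  by exists [::]; rewrite cats0.
by exists (t1 ++ t2); rewrite catA.
Qed.

Let H_nth j k i : i < size (H j) -> i < size (H k) -> nth x0 (H j) i = nth x0 (H k) i.
Proof.
wlog jk : j k / j <= k => [wlogH|].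
  by case: (leqP j k) => [|/ltnW] jk ij ik; [|symmetry]; apply: wlogH.
by have [t ->] := H_extends jk => ij _; rewrite nth_cat ij.
Qed.

Lemma chain_limit : exists p : nat -> T,
  forall n m, n <= size (H m) -> mkseq p n = take n (H m).
Proof.
exists (fun i => nth x0 (H i.+1) i) => n m nm.
apply: (@eq_from_nth _ x0); first by rewrite size_mkseq size_take_min (minn_idPl nm).
move=> i; rewrite size_mkseq => lt_in.
by rewrite nth_mkseq // nth_take // (H_nth (H_size i.+1) (leq_trans lt_in nm)).
Qed.

End ChainLimit.

Lemma eq_pos (w1 w2 : nat -> MM) : w1 =1 w2 -> pos w1 =1 pos w2.
Proof. by move=> w12; elim=> //= n ->; rewrite w12. Qed.

Lemma RL_level_bound w : RL w -> exists M, forall n, (pos w n).1 <= M.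
Proof. by case=> -[M b] bnd; exists M => -[|n] //; apply: ole_level (bnd _ _). Qed.

Section SafetyGame.
Variable A : arena MM.
Implicit Types (v w : V A) (e : Ed A) (s h : seq (Ed A)) (x y : Omega).

Definition colf e : Omega -> Omega := sval (col e).

Lemma colf_mono e : monotoneO (colf e).
Proof. exact: svalP (col e). Qed.

Definition position s : Omega := foldl (fun x e => colf e x) (0, false) s.

Lemma position_rcons s e : position (rcons s e) = colf e (position s).
Proof. by rewrite /position foldl_rcons. Qed.

Lemma pos_mkseq (p : nat -> Ed A) n :
  pos (fun k => col (p k)) n = position (mkseq p n).
Proof. by elim: n => //= n ->; rewrite mkseqS position_rcons. Qed.

Lemma lastnode_rcons v s e : lastnode v (rcons s e) = tgt e.
Proof. by rewrite /lastnode map_rcons last_rcons. Qed.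

Lemma valid_rcons v s e : valid v (rcons s e) <-> valid v s /\ src e = lastnode v s.
Proof.
elim: s v => [|e' s IHs] v /=; first by split=> [[]|[]].
by rewrite IHs; split=> [[-> []] | [[-> ?] ?]].
Qed.

Lemma valid_catl v h1 h2 : valid v (h1 ++ h2) -> valid v h1.
Proof. by elim: h1 v => //= e h1 IHh1 v [-> /IHh1]. Qed.

Lemma lastnode_mkseq v (p : nat -> Ed A) n :
  inf_path_from v p -> lastnode v (mkseq p n) = src (p n).
Proof.
by case: n => [[]|n [_ tgt_src]] //; rewrite mkseqS lastnode_rcons tgt_src.
Qed.

(* Controllable predecessor of Z in the product game on configurations
   (v, x) : V x Omega, where an edge acts on x by its colour. *)
Definition cpre (Z : V A -> Omega -> Prop) v x : Prop :=
  (isP v -> exists2 e, src e = v & Z (tgt e) (colf e x)) /\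
  (~~ isP v -> forall e, src e = v -> Z (tgt e) (colf e x)).

Lemma cpre_mono (Z Z' : V A -> Omega -> Prop) v x :
  (forall e, src e = v -> Z (tgt e) (colf e x) -> Z' (tgt e) (colf e x)) ->
  cpre Z v x -> cpre Z' v x.
Proof.
move=> ZZ' [cP cA]; split=> [/cP[e ev Ze] | /cA cAv e ev]; last exact/ZZ'/cAv.
by exists e; last exact: ZZ'.
Qed.

Definition trap N (Y : V A -> Omega -> Prop) : Prop :=
  forall v x, Y v x -> x.1 < N /\ cpre Y v x.

Definition safe v x : Prop := exists N Y, trap N Y /\ Y v x.

Lemma trap_widen N N' Y : N <= N' -> trap N Y -> trap N' Y.
Proof. by move=> NN' trY v x /trY[lt cY]; split=> //; exact: leq_trans NN'. Qed.

Lemma trapU N (Y Z : V A -> Omega -> Prop) : trap N Z ->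
  (forall v x, Y v x -> x.1 < N /\ cpre (fun w y => Y w y \/ Z w y) v x) ->
  trap N (fun w y => Y w y \/ Z w y).
Proof.
move=> trZ trY v x [/trY // | /trZ[lt cZ]]; split=> //.
by apply: cpre_mono cZ => e _; right.
Qed.

Lemma trap_bigU (I : finType) (N : I -> nat) (Y : I -> V A -> Omega -> Prop) :
  (forall i, trap (N i) (Y i)) -> trap (\max_i N i) (fun v x => exists i, Y i v x).
Proof.
move=> trY v x [i /trY[lt cY]]; split; first exact: leq_trans lt (leq_bigmax i).
by apply: cpre_mono cY => e _; exists i.
Qed.

Lemma safe_fin (I : finType) (P : I -> Prop) (g : I -> V A) (z : I -> Omega) :
  (forall i, P i -> safe (g i) (z i)) ->
  exists N Y, trap N Y /\ forall i, P i -> Y (g i) (z i).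
Proof.
move=> safePg.
have trapP i : exists NY : nat * (V A -> Omega -> Prop),
    trap NY.1 NY.2 /\ (P i -> NY.2 (g i) (z i)).
  have [/safePg[N [Y [trY Yi]]] | nPi] := classic (P i); first by exists (N, Y).
  by exists (0, fun _ _ => False).
pose NY i := sval (constructive_indefinite_description _ (trapP i)).
have NYP i : trap (NY i).1 (NY i).2 /\ (P i -> (NY i).2 (g i) (z i)).
  exact: svalP (constructive_indefinite_description _ (trapP i)).
exists (\max_i (NY i).1), (fun v x => exists i, (NY i).2 v x); split.
  by apply: trap_bigU => i; case: (NYP i).
by move=> i Pi; exists i; apply: (proj2 (NYP i)).
Qed.

Section Spoiler.
Variables (S : V A -> seq (Ed A) -> Ed A) (u : V A).
Hypothesis S_strategy : is_strategy S.

Definition consistent_prefix h : Prop :=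
  valid u h /\ forall h1 e h2, h = h1 ++ e :: h2 -> isP (src e) -> e = S u h1.

Lemma consistent_prefix_nil : consistent_prefix [::].
Proof. by split=> // -[]. Qed.

Lemma consistent_prefix_rcons h e :
  consistent_prefix h -> src e = lastnode u h -> (isP (src e) -> e = S u h) ->
  consistent_prefix (rcons h e).
Proof.
move=> [vh ch] eh Se; split; first exact/valid_rcons.
move=> h1 e' h2; case/lastP: h2 => [|h2 e2].
  by rewrite cats1 => /rcons_inj[<- <-].
by rewrite -rcons_cons -rcons_cat => /rcons_inj[/ch].
Qed.

Lemma consistent_prefix_catl h1 h2 :
  consistent_prefix (h1 ++ h2) -> consistent_prefix h1.
Proof.
move=> [/valid_catl vh1 ch]; split=> // h e h' eq_h1.
by apply: ch; rewrite eq_h1 -catA.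
Qed.

Lemma consistent_play (p : nat -> Ed A) :
  (forall n, consistent_prefix (mkseq p n)) -> inf_path_from u p /\ consistent S u p.
Proof.
move=> cp; split; last first.
  by move=> n; apply: (proj2 (cp n.+1)); rewrite mkseqS -cats1.
split; first by case: (cp 1) => -[].
move=> n; case: (cp n.+2) => + _.
by rewrite mkseqS => /valid_rcons[_ ->]; rewrite mkseqS lastnode_rcons.
Qed.

Definition unsafe_history h : Prop :=
  consistent_prefix h /\ ~ safe (lastnode u h) (position h).

(* If no consistent unsafe extension of h ever climbed above the level of h,
   these extensions would form, with the finitely many safe configurations
   they can step into, a bounded trap containing the end of h. *)
Lemma unsafe_history_climb h : unsafe_history h ->
  exists h', unsafe_history (h ++ h') /\ (position h).1 < (position (h ++ h')).1.
Proof.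
move=> uh; apply: NNPP => no_climb; apply: (proj2 uh).
pose N := (position h).1.+1.
have low h' : unsafe_history (h ++ h') -> (position (h ++ h')).1 < N.
  by move=> uh'; rewrite ltnS leqNgt; apply/negP => climb; apply: no_climb; exists h'.
pose Y w y := exists2 h', unsafe_history (h ++ h') &
  lastnode u (h ++ h') = w /\ position (h ++ h') = y.
have [M [Z [trZ Zsafe]]] := safe_fin (fun (i : Ed A * 'I_N * bool)
  (si : safe (tgt i.1.1) (colf i.1.1 (nat_of_ord i.1.2, i.2))) => si).
have step h' e : unsafe_history (h ++ h') -> src e = lastnode u (h ++ h') ->
    (isP (src e) -> e = S u (h ++ h')) ->
    Y (tgt e) (colf e (position (h ++ h'))) \/ Z (tgt e) (colf e (position (h ++ h'))).
  move=> uh' eh' Se; have lt := low h' uh'.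
  have [safe_e | unsafe_e] := classic (safe (tgt e) (colf e (position (h ++ h')))).
    right; have := Zsafe (e, Ordinal lt, (position (h ++ h')).2).
    by rewrite -surjective_pairing; apply.
  left; exists (rcons h' e); rewrite -rcons_cat.
    split; last by rewrite lastnode_rcons position_rcons.
    by apply: consistent_prefix_rcons => //; case: uh'.
  by rewrite lastnode_rcons position_rcons.
exists (maxn N M), (fun w y => Y w y \/ Z w y); split; last first.
  by left; exists [::]; rewrite cats0.
apply: trapU (trap_widen (leq_maxr _ _) trZ) _ => _ _ [h' uh' [<- <-]].
split; first exact: leq_trans (low h' uh') (leq_maxl _ _).
split=> [isPh | nisPh e eh].
  have Sh := S_strategy (proj1 (proj1 uh')) isPh.
  by exists (S u (h ++ h')) => //; apply: step; rewrite // Sh.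
by apply: step; rewrite // eh (negbTE nisPh).
Qed.

Lemma unsafe_not_winning : ~ safe u (0, false) -> ~ winning_from RL S u.
Proof.
move=> unsafe0 winS; have [e0 _] := arena_total u.
pose climbs h h' := unsafe_history (h ++ h') /\ (position h).1 < (position (h ++ h')).1.
pose climb h := epsilon (inhabits [::]) (climbs h).
have climbP h : unsafe_history h -> climbs h (climb h).
  by move=> uh; apply: epsilon_spec; exact: unsafe_history_climb.
pose H k := iter k (fun h => h ++ climb h) [::].
have H_unsafe k : unsafe_history (H k) /\ k <= (position (H k)).1.
  elim: k => [|k [uHk IHk]].
    by split=> //; split=> //; exact: consistent_prefix_nil.
  by have [uHk1 lt] := climbP _ uHk; split=> //; exact: leq_ltn_trans lt.
have H_size k : k <= size (H k).
  elim: k => // k IHk; have [_] := climbP _ (proj1 (H_unsafe k)).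
  rewrite [H k.+1]/= size_cat; case: (climb (H k)) => [|e c _].
    by rewrite cats0 ltnn.
  by rewrite /= addnS ltnS (leq_trans IHk) ?leq_addr.
have [p pH] := chain_limit e0 (fun k => ex_intro _ _ erefl) H_size.
have [path_p cons_p] : inf_path_from u p /\ consistent S u p.
  apply: consistent_play => n; apply: (@consistent_prefix_catl _ (drop n (H n))).
  by rewrite (pH n n (H_size n)) cat_take_drop; case: (H_unsafe n) => -[].
have [M bnd] := RL_level_bound (winS p path_p cons_p).
have [_ lvl] := H_unsafe M.+1.
have := bnd (size (H M.+1)); rewrite pos_mkseq (pH _ _ (leqnn _)) take_size.
by move/(leq_trans lvl); rewrite ltnn.
Qed.

End Spoiler.

Section TwoStateStrategy.
Variables (N : nat) (Y : V A -> Omega -> Prop).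
Hypothesis trapY : trap N Y.

Lemma top_points_ex w : exists c : 'I_2 -> Omega,
  [/\ forall i y, Y w y -> Y w (c i),
      forall y, Y w y -> ole y (c ord0) \/ ole y (c ord_max)
    & Y w (0, false) -> ole (0, false) (c ord0)].
Proof.
have [[y Yy] | empty] := classic (exists y, Y w y); last first.
  exists (fun=> (0, false)); split=> [i y' Yy' | y' Yy' | Yy'];
  by case: empty; eexists; exact: Yy'.
have [z Yz z0] : exists2 z, Y w z & (Y w (0, false) -> ole (0, false) z).
  have [Y0 | nY0] := classic (Y w (0, false)); last by exists y.
  by exists (0, false) => // _; exact: ole_refl.
have [a [b [Ya Yb za cover]]] :=
  bounded_cover2 (fun x (Yx : Y w x) => proj1 (trapY Yx)) Yz.
exists (fun i => if i == ord0 then a else b); split=> //.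
- by move=> i _ _; case: (i == ord0).
- by move=> /z0 /ole_trans; apply.
Qed.

Definition top w : 'I_2 -> Omega :=
  sval (constructive_indefinite_description _ (top_points_ex w)).

Lemma topP w :
  [/\ forall i y, Y w y -> Y w (top w i),
      forall y, Y w y -> ole y (top w ord0) \/ ole y (top w ord_max)
    & Y w (0, false) -> ole (0, false) (top w ord0)].
Proof. exact: svalP (constructive_indefinite_description _ (top_points_ex w)). Qed.

Lemma move_ex w m : exists e, src e = w /\
  (isP w -> Y w (top w m) -> Y (tgt e) (colf e (top w m))).
Proof.
have [[Pw Ytop] | no] := classic (isP w /\ Y w (top w m)).
  by have [_ [/(_ Pw) [e ew Ye] _]] := trapY Ytop; exists e.
by have [e ew] := arena_total w; exists e; split=> // Pw Ytop; case: no.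
Qed.

Definition move w m : Ed A :=
  sval (constructive_indefinite_description _ (move_ex w m)).

Lemma moveP w m : src (move w m) = w /\
  (isP w -> Y w (top w m) -> Y (tgt (move w m)) (colf (move w m) (top w m))).
Proof. exact: svalP (constructive_indefinite_description _ (move_ex w m)). Qed.

(* The memory state names the top point that dominates the current position. *)
Definition update m e : 'I_2 :=
  if oleb (colf e (top (src e) m)) (top (tgt e) ord0) then ord0 else ord_max.

Definition memory s : 'I_2 := foldl update ord0 s.

Lemma memory_rcons s e : memory (rcons s e) = update (memory s) e.
Proof. by rewrite /memory foldl_rcons. Qed.

Definition two_state v s : Ed A := move (lastnode v s) (memory s).

Lemma two_state_strategy : is_strategy two_state.
Proof. by move=> v s _ _; case: (moveP (lastnode v s) (memory s)). Qed.

Lemma two_state_mem : built_on_mem 2 two_state.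
Proof.
exists ord0, update => v1 s1 v2 s2 _ _ eq_last _ eq_mem.
by rewrite /two_state /memory eq_last eq_mem.
Qed.

Lemma two_state_step w m e : Y w (top w m) -> src e = w -> (isP w -> e = move w m) ->
  Y (tgt e) (top (tgt e) (update m e)) /\
  ole (colf e (top w m)) (top (tgt e) (update m e)).
Proof.
move=> Ytop ew Se; have [inY cover _] := topP (tgt e).
have Ye : Y (tgt e) (colf e (top w m)).
  case Pw: (isP w); first by rewrite (Se Pw); apply: (proj2 (moveP w m)).
  by apply: (proj2 (proj2 (trapY Ytop))); rewrite ?Pw.
rewrite /update ew; case: oleP => [le0 | nle0].
  by split; first exact: inY Ye.
by split; [exact: inY Ye | case: (cover _ Ye)].
Qed.

Lemma two_state_winning u : Y u (0, false) -> winning_from RL two_state u.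
Proof.
move=> Yu p path_p cons_p.
have inv n : Y (src (p n)) (top (src (p n)) (memory (mkseq p n))) /\
    ole (position (mkseq p n)) (top (src (p n)) (memory (mkseq p n))).
  elim: n => [|n [Ytop le_top]].
    have [inY _ init] := topP u; rewrite (proj1 path_p).
    by split; [exact: inY Yu | exact: init].
  have Sp : isP (src (p n)) -> p n = move (src (p n)) (memory (mkseq p n)).
    by move=> Pn; rewrite {1}(cons_p n Pn) /two_state (lastnode_mkseq _ path_p).
  have [Ynext le_next] := two_state_step Ytop erefl Sp.
  rewrite mkseqS position_rcons memory_rcons -(proj2 path_p n).
  by split=> //; exact: ole_trans (colf_mono (p n) le_top) le_next.
exists (N, false) => n _; right; rewrite pos_mkseq.
have [Ytop le_top] := inv n.
exact: leq_ltn_trans (ole_level le_top) (proj1 (trapY Ytop)).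
Qed.

End TwoStateStrategy.

End SafetyGame.

Lemma admits_mem_RL_2 : admits_mem RL 2.
Proof.
move=> A.
have [N [Y [trY safeY]]] := safe_fin (fun (u : V A) (su : safe u (0, false)) => su).
exists (two_state trY); split; first exact: two_state_strategy.
split; first exact: two_state_mem.
move=> u [S [S_strategy winS]]; apply: two_state_winning; apply: safeY.
by apply: NNPP => unsafe0; exact: unsafe_not_winning S_strategy unsafe0 winS.
Qed.

Definition ladderF (x : Omega) : Omega := if x.2 then (x.1.+1, true) else (x.1, true).
Definition ladderG (x : Omega) : Omega := if x.2 then (x.1, false) else (x.1.+1, false).

Lemma ladderF_mono : monotoneO ladderF.
Proof. by apply: monotoneO_step => n [] []; [right | left | right | right] => /=. Qed.

Lemma ladderG_mono : monotoneO ladderG.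
Proof. by apply: monotoneO_step => n [] []; [right | right | left | right] => /=. Qed.

Definition ladder (b : bool) : MM :=
  if b then exist _ ladderG ladderG_mono else exist _ ladderF ladderF_mono.

Lemma ladder_inj : injective ladder.
Proof. by move=> [] [] // /(congr1 (fun f : MM => sval f (0, false))). Qed.

Lemma card_unit_gt0 : 0 < #|{: unit}|.
Proof. by rewrite card_unit. Qed.

Definition ladder_arena : arena MM :=
  @Arena MM unit bool (fun=> true) (fun=> tt) ladder (fun=> tt)
    (fun _ _ _ eq_col _ => ladder_inj eq_col) card_unit_gt0
    (fun v => ex_intro _ true (esym (unitE v))).

Lemma pos_ladder_const b n : n <= (pos (fun=> ladder b) n.+1).1.
Proof.
suff -> : pos (fun=> ladder b) n.+1 = if b then (n.+1, false) else (n, true).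
  by case: b.
by elim: n => [|n /= ->]; case: b.
Qed.

Lemma pos_ladder_alternating n : pos (fun k => ladder (odd k)) n = (0, odd n).
Proof. by elim: n => //= n ->; case: (odd n). Qed.

Lemma not_admits_mem_RL_1 : ~ admits_mem RL 1.
Proof.
move=> /(_ ladder_arena) [S [_ [[m0 [delta S_mem]] S_opt]]].
have valid_all (v : V ladder_arena) s : valid v s.
  by elim: s v => //= e s IHs v; rewrite !unitE.
pose alternate (v : V ladder_arena) (s : seq (Ed ladder_arena)) : Ed ladder_arena :=
  odd (size s).
have alternate_wins : winning_from RL alternate tt.
  move=> p _ cons_p; exists (1, false) => n _; right.
  have pE k : col (p k) = ladder (odd k).
    by rewrite (cons_p k isT) /alternate size_mkseq.
  by rewrite (eq_pos pE) pos_ladder_alternating.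
have S_wins : winning_from RL S tt.
  apply: S_opt; exists alternate; split=> // v s _ _.
  by rewrite !unitE.
pose p := fun _ : nat => S tt [::].
have cons_p : consistent S tt p.
  move=> n _; apply: S_mem; rewrite ?valid_all //; first by rewrite !unitE.
  by rewrite !(ord1 (foldl _ _ _)).
have [M bnd] := RL_level_bound (S_wins p (conj (unitE _) (fun=> erefl)) cons_p).
by have := leq_trans (pos_ladder_const (S tt [::]) M.+1) (bnd M.+2); rewrite ltnn.
Qed.

Theorem proposition1 : GenMem_eq RL 2.
Proof.
split=> //; split; first exact: admits_mem_RL_2.
by case=> [|[|j]] // _ _; exact: not_admits_mem_RL_1.
Qed.
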